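(* Under the conical assumption (all dependent variables have vanishing covariant derivative in the radial direction $r$, measured from the cone apex), the steady compressible Euler equations in a 3D Euclidean space with coordinates $(\xi^1,\xi^2,r)$, where $r$ is orthogonal to the surface coordinates and has unit scale, reduce to the following system on the surface of the unit sphere: \begin{gather*} \frac{\partial}{\partial \xi^\beta}\left(\rho\sqrt{g}v^\beta\right) + 2\rho \sqrt{g}V^3 = 0,\\ \frac{\partial }{\partial\xi^\beta}\left(\sqrt{g}\left[\rho v^\alpha v^\beta + g^{\alpha\beta}P\right]\right) + \overset{(g)}{\Gamma}{}_{\gamma}{}^{\alpha}{}_{\nu}\,\sqrt{g}\left[\rho v^\gamma v^\nu+g^{\gamma\nu}P\right] + 3\rho\sqrt{g}v^\alpha V^3 = 0,\\ v^\alpha\frac{\partial V^3}{\partial \xi^\alpha} - q^2_c = 0,\\ \frac{\partial}{\partial \xi^\beta}\left( \sqrt{g}\left[\rho E+P\right] v^\beta \right) + 2\sqrt{g}\left[\rho E+P\right] V^3 =0. \end{gather*}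
   Context: Einstein summation is used; Greek indices take values 1,2. $\rho$ is density, $v^\beta = r\tilde v^\beta$ are the rescaled (r-independent) surface velocity components, $V^3$ is the radial velocity component, $E=e+\frac12|\mathbf V|^2$ is total specific energy with $e$ the specific thermal energy, $P=P(\rho,e)$ the pressure, $g_{\alpha\beta}=\tilde g_{\alpha\beta}/r^2$ the metric of the unit sphere in arbitrary surface coordinates $\xi^\alpha$ (with $r$-dependence removed), $g^{\alpha\beta}$ its inverse, $g$ its determinant, $q_c=\sqrt{g_{\alpha\beta}v^\alpha v^\beta}$ the crossflow speed, and $\overset{(g)}{\Gamma}{}_{\gamma}{}^{\alpha}{}_{\nu}$ the Christoffel symbol (of the second kind, upper index $\alpha$, lower indices $\gamma,\nu$) of the metric $g_{\alpha\beta}$. The starting equations are the steady Euler equations in coordinate-free form: $(\rho\sqrt{G}V^j)_{|j}=0$, $(\sqrt{G}[\rho V^iV^j+G^{ij}P])_{|j}=0$, $(\sqrt{G}[\rho E+P]V^j)_{|j}=0$, with $G_{ij}$ the 3D metric and $(\cdot)_{|j}$ the covariant derivative. *)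

From Stdlib Require Import Reals Lra.
From Coquelicot Require Import Coquelicot.
Open Scope R_scope.

(* Surface index alpha in {1,2}; 3D index in {xi^1, xi^2, r}. *)
Inductive ix := i1 | i2.
Inductive ix3 := s (a : ix) | rad.

Definition sum2 (f : ix -> R) : R := f i1 + f i2.
Definition sum3 (f : ix3 -> R) : R := f (s i1) + f (s i2) + f rad.

Definition delta2 (a b : ix) : R :=
  match a, b with i1, i1 => 1 | i2, i2 => 1 | _, _ => 0 end.
Definition delta3 (i j : ix3) : R :=
  match i, j with s a, s b => delta2 a b | rad, rad => 1 | _, _ => 0 end.

Definition fld2 := R -> R -> R.
Definition fld3 := R -> R -> R -> R.

Definition pd2 (a : ix) (f : fld2) (x y : R) : R :=
  match a with
  | i1 => Derive (fun t => f t y) x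
  | i2 => Derive (fun t => f x t) y
  end.
Definition pd3 (i : ix3) (F : fld3) (x y r : R) : R :=
  match i with
  | s i1 => Derive (fun t => F t y r) x
  | s i2 => Derive (fun t => F x t r) y
  | rad => Derive (fun t => F x y t) r
  end.

Definition det2 (g : ix -> ix -> fld2) (x y : R) : R :=
  g i1 i1 x y * g i2 i2 x y - g i1 i2 x y * g i2 i1 x y.
Definition sqrtg (g : ix -> ix -> fld2) (x y : R) : R := sqrt (det2 g x y).

(* Christoffel symbol Gamma_c^a_n of g (upper index a, lower c, n);
   ginv is the inverse metric g^{ab}. *)
Definition Gam2 (g ginv : ix -> ix -> fld2) (a c n : ix) (x y : R) : R :=
  / 2 * sum2 (fun l => ginv a l x y *
     (pd2 c (g l n) x y + pd2 n (g l c) x y - pd2 l (g c n) x y)).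

Definition Gmet (g : ix -> ix -> fld2) (i j : ix3) : fld3 :=
  fun x y r =>
    match i, j with
    | s a, s b => r ^ 2 * g a b x y
    | rad, rad => 1
    | _, _ => 0
    end.

Definition det3 (M : ix3 -> ix3 -> R) : R :=
  let A := s i1 in let B := s i2 in let C := rad in
  M A A * (M B B * M C C - M B C * M C B)
  - M A B * (M B A * M C C - M B C * M C A)
  + M A C * (M B A * M C B - M B B * M C A).

Definition sqrtG (g : ix -> ix -> fld2) (x y r : R) : R :=
  sqrt (det3 (fun i j => Gmet g i j x y r)).

(* Christoffel symbol Gamma_j^i_k of G; Ginv is the inverse metric G^{ij}. *)
Definition Gam3 (g : ix -> ix -> fld2) (Ginv : ix3 -> ix3 -> fld3)
  (i j k : ix3) (x y r : R) : R :=
  / 2 * sum3 (fun l => Ginv i l x y r *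
     (pd3 j (Gmet g l k) x y r + pd3 k (Gmet g l j) x y r
      - pd3 l (Gmet g j k) x y r)).

Definition cov1 g Ginv (W : ix3 -> fld3) (i j : ix3) (x y r : R) : R :=
  pd3 j (W i) x y r + sum3 (fun k => Gam3 g Ginv i j k x y r * W k x y r).

(* divergence T^j_{|j} of a contravariant vector density of weight 1
   (such as sqrt(G) rho V^j) *)
Definition divD1 g Ginv (T : ix3 -> fld3) (x y r : R) : R :=
  sum3 (fun j =>
    pd3 j (T j) x y r
    + sum3 (fun k => Gam3 g Ginv j j k x y r * T k x y r)
    - sum3 (fun k => Gam3 g Ginv k k j x y r * T j x y r)).

(* divergence T^{ij}_{|j} of a rank-2 contravariant tensor density of weight 1 *)
Definition divD2 g Ginv (T : ix3 -> ix3 -> fld3) (i : ix3) (x y r : R) : R :=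
  sum3 (fun j =>
    pd3 j (T i j) x y r
    + sum3 (fun l => Gam3 g Ginv i j l x y r * T l j x y r)
    + sum3 (fun l => Gam3 g Ginv j j l x y r * T i l x y r)
    - sum3 (fun l => Gam3 g Ginv l l j x y r * T i j x y r)).

Definition P3 (Pfun : R -> R -> R) (rho e : fld3) : fld3 :=
  fun x y r => Pfun (rho x y r) (e x y r).
Definition E3 g (e : fld3) (V : ix3 -> fld3) : fld3 :=
  fun x y r => e x y r + / 2 *
    sum3 (fun i => sum3 (fun j => Gmet g i j x y r * V i x y r * V j x y r)).

Definition Euler3D g Ginv (Pfun : R -> R -> R) (rho e : fld3) (V : ix3 -> fld3)
  (x y r : R) : Prop :=
  divD1 g Ginv (fun j x y r => sqrtG g x y r * rho x y r * V j x y r) x y r = 0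
  /\ (forall i : ix3,
        divD2 g Ginv (fun i j x y r => sqrtG g x y r *
            (rho x y r * V i x y r * V j x y r
             + Ginv i j x y r * P3 Pfun rho e x y r)) i x y r = 0)
  /\ divD1 g Ginv (fun j x y r => sqrtG g x y r *
            (rho x y r * E3 g e V x y r + P3 Pfun rho e x y r) * V j x y r) x y r = 0.

Definition conical g Ginv (rho e : fld3) (V : ix3 -> fld3) (x y r : R) : Prop :=
  pd3 rad rho x y r = 0 /\ pd3 rad e x y r = 0 /\
  (forall i, cov1 g Ginv V i rad x y r = 0).

Definition rho_s (rho : fld3) : fld2 := fun x y => rho x y 1.
Definition e_s (e : fld3) : fld2 := fun x y => e x y 1.
(* rescaled surface velocity v^a = r tilde V^a, taken at r = 1 *)
Definition v_s (V : ix3 -> fld3) (a : ix) : fld2 := fun x y => 1 * V (s a) x y 1.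
Definition V3_s (V : ix3 -> fld3) : fld2 := fun x y => V rad x y 1.
Definition P_s Pfun (rho e : fld3) : fld2 := fun x y => Pfun (rho_s rho x y) (e_s e x y).
Definition E_s g (e : fld3) (V : ix3 -> fld3) : fld2 := fun x y => E3 g e V x y 1.
Definition qc g (V : ix3 -> fld3) (x y : R) : R :=
  sqrt (sum2 (fun a => sum2 (fun b => g a b x y * v_s V a x y * v_s V b x y))).

Definition SurfaceSystem g ginv (Pfun : R -> R -> R) (rho e : fld3) (V : ix3 -> fld3)
  (x y : R) : Prop :=
  let rh := rho_s rho in let v := v_s V in let W := V3_s V in
  let P := P_s Pfun rho e in let E := E_s g e V in
  sum2 (fun b => pd2 b (fun x y => rh x y * sqrtg g x y * v b x y) x y)
    + 2 * rh x y * sqrtg g x y * W x y = 0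
  /\ (forall a : ix,
       sum2 (fun b => pd2 b (fun x y => sqrtg g x y *
               (rh x y * v a x y * v b x y + ginv a b x y * P x y)) x y)
       + sum2 (fun c => sum2 (fun n => Gam2 g ginv a c n x y * sqrtg g x y *
               (rh x y * v c x y * v n x y + ginv c n x y * P x y)))
       + 3 * rh x y * sqrtg g x y * v a x y * W x y = 0)
  /\ sum2 (fun a => v a x y * pd2 a W x y) - (qc g V x y) ^ 2 = 0
  /\ sum2 (fun b => pd2 b (fun x y => sqrtg g x y *
               (rh x y * E x y + P x y) * v b x y) x y)
     + 2 * sqrtg g x y * (rh x y * E x y + P x y) * W x y = 0.

Definition open2 (U : R -> R -> Prop) : Prop :=
  forall x y, U x y -> exists eps, 0 < eps /\
    forall x' y', Rabs (x' - x) < eps -> Rabs (y' - y) < eps -> U x' y'.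

From Stdlib Require Import Reals Lra.
From Coquelicot Require Import Coquelicot.
Open Scope R_scope.

(* In the cone metric dr^2 + r^2 g one has sqrt G = r^2 sqrt g, G^{ab} = g^{ab}/r^2, and the
   only Christoffel symbols involving r are Gamma_b^a_r = Gamma_r^a_b = delta^a_b / r and
   Gamma_a^r_b = - r g_ab.  The conical assumption makes rho, e and V^3 independent of r,
   while V^a_{|r} = 0 makes r V^a = v^a independent of r.  Hence every flux density of the
   Euler equations is a fixed power of r times a surface quantity, and each 3D divergence
   equals a power of r times the corresponding surface residual (the extra terms 2 rho V^3,
   3 rho v^a V^3 come from d/dr of r^2 and from the Christoffel symbols).  The radial
   momentum equation is the only non-formal one: by the product rule it equals
   V^3 (mass residual) + rho sqrt g (v^a d_a V^3 - q_c^2), using g_ab g^ba = 2, so given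
   mass conservation it is equivalent to the third surface equation. *)

Lemma open2_locally_l (U : R -> R -> Prop) x y :
  open2 U -> U x y -> locally x (fun t => U t y).
Proof.
  intros HU Hu; destruct (HU x y Hu) as [eps [He H]].
  exists (mkposreal eps He); intros t Ht; apply H; [exact Ht|].
  rewrite Rminus_diag, Rabs_R0; exact He.
Qed.

Lemma open2_locally_r (U : R -> R -> Prop) x y :
  open2 U -> U x y -> locally y (fun t => U x t).
Proof.
  intros HU Hu; destruct (HU x y Hu) as [eps [He H]].
  exists (mkposreal eps He); intros t Ht; apply H; [|exact Ht].
  rewrite Rminus_diag, Rabs_R0; exact He.
Qed.

Lemma pd3_surface_local (U : R -> R -> Prop) (F : fld3) (f : fld2) c x y r a :
  open2 U -> U x y -> (forall x' y', U x' y' -> F x' y' r = c * f x' y') ->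
  pd3 (s a) F x y r = c * pd2 a f x y.
Proof.
  intros HU Hu HF; destruct a; simpl; rewrite <- Derive_scal; apply Derive_ext_loc.
  - destruct (open2_locally_l U x y HU Hu) as [eps He].
    exists eps; intros t Ht; apply HF, He, Ht.
  - destruct (open2_locally_r U x y HU Hu) as [eps He].
    exists eps; intros t Ht; apply HF, He, Ht.
Qed.

Lemma pd3_rad_local (F : fld3) (h : R -> R) x y r :
  0 < r -> (forall t, 0 < t -> F x y t = h t) -> pd3 rad F x y r = Derive h r.
Proof.
  intros Hr HF; simpl; apply Derive_ext_loc.
  exists (mkposreal r Hr); intros t Ht; apply HF.
  change (Rabs (t - r) < r) in Ht; apply Rabs_def2 in Ht; lra.
Qed.

Lemma pd3_rad_linear (F : fld3) c x y r :
  0 < r -> (forall t, 0 < t -> F x y t = t * c) -> pd3 rad F x y r = c.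
Proof.
  intros Hr HF; rewrite (pd3_rad_local F (fun t => t * c) x y r Hr HF).
  apply is_derive_unique; auto_derive; auto; ring.
Qed.

Lemma pd3_rad_quadratic (F : fld3) c x y r :
  0 < r -> (forall t, 0 < t -> F x y t = t ^ 2 * c) -> pd3 rad F x y r = 2 * r * c.
Proof.
  intros Hr HF; rewrite (pd3_rad_local F (fun t => t ^ 2 * c) x y r Hr HF).
  apply is_derive_unique; auto_derive; auto; ring.
Qed.

Lemma const_on_pos_of_derive0 (f : R -> R) :
  (forall t, 0 < t -> is_derive f t 0) -> forall t, 0 < t -> f t = f 1.
Proof.
  intros Hf t Ht; destruct (Rtotal_order t 1) as [Hlt|[->|Hgt]].
  - apply eq_is_derive; [intros u Hu; apply Hf; lra | lra].
  - reflexivity.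
  - symmetry; apply eq_is_derive; [intros u Hu; apply Hf; lra | lra].
Qed.

Definition ex_pd2 (a : ix) (f : fld2) (x y : R) : Prop :=
  match a with
  | i1 => ex_derive (fun t => f t y) x
  | i2 => ex_derive (fun t => f x t) y
  end.

Lemma pd2_mult a (f h : fld2) x y : ex_pd2 a f x y -> ex_pd2 a h x y ->
  pd2 a (fun x y => f x y * h x y) x y = pd2 a f x y * h x y + f x y * pd2 a h x y.
Proof. destruct a; apply Derive_mult. Qed.

Lemma ex_pd2_mult a (f h : fld2) x y : ex_pd2 a f x y -> ex_pd2 a h x y ->
  ex_pd2 a (fun x y => f x y * h x y) x y.
Proof. destruct a; apply ex_derive_mult. Qed.

Lemma ex_pd2_sqrtg a g x y :
  (forall c d, ex_pd2 a (g c d) x y) -> 0 < det2 g x y -> ex_pd2 a (sqrtg g) x y.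
Proof.
  intros Hg Hdet; unfold sqrtg, det2 in *; destruct a; simpl in *;
    auto_derive; repeat split; try apply Hg; exact Hdet.
Qed.

Lemma sum2_pd2_mult (m : ix -> fld2) (W : fld2) x y :
  (forall b, ex_pd2 b (m b) x y) -> (forall b, ex_pd2 b W x y) ->
  sum2 (fun b => pd2 b (fun x y => m b x y * W x y) x y)
  = sum2 (fun b => pd2 b (m b) x y) * W x y + sum2 (fun b => m b x y * pd2 b W x y).
Proof.
  intros Hm HW; unfold sum2; rewrite !pd2_mult by auto; ring.
Qed.

Lemma inv2_unique (A B C : ix -> ix -> R) :
  (forall a b, sum2 (fun c => A a c * B c b) = delta2 a b) ->
  (forall a b, sum2 (fun c => B a c * C c b) = delta2 a b) ->
  forall a b, A a b = C a b.
Proof.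
  intros HAB HBC a b.
  replace (A a b) with (A a i1 * delta2 i1 b + A a i2 * delta2 i2 b)
    by (destruct b; simpl; ring).
  replace (C a b) with (delta2 a i1 * C i1 b + delta2 a i2 * C i2 b)
    by (destruct a; simpl; ring).
  rewrite <- (HBC i1 b), <- (HBC i2 b), <- (HAB a i1), <- (HAB a i2).
  unfold sum2; ring.
Qed.

Lemma inv2_sym (G H : ix -> ix -> R) :
  (forall a b, G a b = G b a) ->
  (forall a b, sum2 (fun c => G a c * H c b) = delta2 a b) ->
  forall a b, H a b = H b a.
Proof.
  intros Gsym HGH a b; symmetry.
  apply (inv2_unique (fun a b => H b a) G H); [|exact HGH].
  intros a' b'; replace (delta2 a' b') with (delta2 b' a') by (destruct a', b'; reflexivity).
  rewrite <- (HGH b' a'); unfold sum2; rewrite (Gsym b' i1), (Gsym b' i2); ring.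
Qed.

Lemma trace_mul_inv2 (G H : ix -> ix -> R) :
  (forall a b, sum2 (fun c => G a c * H c b) = delta2 a b) ->
  sum2 (fun b => sum2 (fun c => G b c * H c b)) = 2.
Proof. intros HGH; unfold sum2 at 1; rewrite !HGH; simpl; ring. Qed.

Lemma det2_neq0_of_inv (g ginv : ix -> ix -> fld2) x y :
  (forall a b, sum2 (fun c => g a c x y * ginv c b x y) = delta2 a b) -> det2 g x y <> 0.
Proof.
  intros Hinv Hdet.
  assert (Hdet_mul : det2 g x y * det2 ginv x y = 1).
  { pose proof (Hinv i1 i1) as A11; pose proof (Hinv i1 i2) as A12.
    pose proof (Hinv i2 i1) as A21; pose proof (Hinv i2 i2) as A22.
    unfold sum2 in *; simpl in A11, A12, A21, A22; unfold det2.
    transitivity ((g i1 i1 x y * ginv i1 i1 x y + g i1 i2 x y * ginv i2 i1 x y) *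
                  (g i2 i1 x y * ginv i1 i2 x y + g i2 i2 x y * ginv i2 i2 x y) -
                  (g i1 i1 x y * ginv i1 i2 x y + g i1 i2 x y * ginv i2 i2 x y) *
                  (g i2 i1 x y * ginv i1 i1 x y + g i2 i2 x y * ginv i2 i1 x y)).
    - ring.
    - rewrite A11, A12, A21, A22; ring. }
  rewrite Hdet in Hdet_mul; lra.
Qed.

Section Gram.

Variables (J : ix -> nat -> R) (G : ix -> ix -> R).
Hypothesis HJ : forall a b,
  G a b = J a 0%nat * J b 0%nat + J a 1%nat * J b 1%nat + J a 2%nat * J b 2%nat.

Lemma gram_sym a b : G a b = G b a.
Proof. rewrite !HJ; ring. Qed.

Lemma gram_form_nonneg (w : ix -> R) : 0 <= sum2 (fun a => sum2 (fun b => G a b * w a * w b)).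
Proof.
  unfold sum2; rewrite !HJ.
  match goal with |- 0 <= ?q => replace q with
    ((w i1 * J i1 0%nat + w i2 * J i2 0%nat) ^ 2 + (w i1 * J i1 1%nat + w i2 * J i2 1%nat) ^ 2
     + (w i1 * J i1 2%nat + w i2 * J i2 2%nat) ^ 2) by ring end.
  repeat apply Rplus_le_le_0_compat; apply pow2_ge_0.
Qed.

(* Cauchy-Binet: the Gram determinant is the sum of the squared 2x2 minors of J. *)
Lemma gram_det_nonneg : 0 <= G i1 i1 * G i2 i2 - G i1 i2 * G i2 i1.
Proof.
  rewrite !HJ.
  match goal with |- 0 <= ?q => replace q with
    ((J i1 0%nat * J i2 1%nat - J i1 1%nat * J i2 0%nat) ^ 2
     + (J i1 0%nat * J i2 2%nat - J i1 2%nat * J i2 0%nat) ^ 2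
     + (J i1 1%nat * J i2 2%nat - J i1 2%nat * J i2 1%nat) ^ 2) by ring end.
  repeat apply Rplus_le_le_0_compat; apply pow2_ge_0.
Qed.

End Gram.

Lemma sqrtG_cone g x y r : sqrtG g x y r = r ^ 2 * sqrtg g x y.
Proof.
  unfold sqrtG, sqrtg, det3, Gmet; simpl.
  match goal with |- sqrt ?d = _ => replace d with ((r ^ 2) ^ 2 * det2 g x y)
    by (unfold det2; ring) end.
  rewrite sqrt_mult_alt, sqrt_pow2 by apply pow2_ge_0; reflexivity.
Qed.

Lemma pd3_Gmet_surf g b c d x y r :
  pd3 (s b) (Gmet g (s c) (s d)) x y r = r ^ 2 * pd2 b (g c d) x y.
Proof. destruct b; unfold pd3, pd2, Gmet; rewrite <- Derive_scal; reflexivity. Qed.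

Lemma pd3_Gmet_rad g c d x y r : pd3 rad (Gmet g (s c) (s d)) x y r = 2 * r * g c d x y.
Proof. unfold pd3, Gmet; apply is_derive_unique; auto_derive; auto; ring. Qed.

Lemma pd3_Gmet_const g i j k x y r :
  (i = rad \/ j = rad) -> pd3 k (Gmet g i j) x y r = 0.
Proof.
  intros [-> | ->]; [destruct j | destruct i];
    destruct k as [[|]|]; unfold pd3, Gmet; apply Derive_const.
Qed.

Definition cone_christoffel g ginv (i j k : ix3) x y r : R :=
  match i, j, k with
  | s a, s b, s c => Gam2 g ginv a b c x y
  | s a, s b, rad => delta2 a b / r
  | s a, rad, s c => delta2 a c / r
  | rad, s b, s c => - r * g b c x y
  | _, _, _ => 0
  end.

Section ConeMetric.

Variables (g ginv : ix -> ix -> fld2) (Ginv : ix3 -> ix3 -> fld3) (x y r : R).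
Hypothesis Hr : 0 < r.
Hypothesis HGinv : forall i j,
  sum3 (fun k => Gmet g i k x y r * Ginv k j x y r) = delta3 i j /\
  sum3 (fun k => Ginv i k x y r * Gmet g k j x y r) = delta3 i j.
Hypothesis Hginv : forall a b,
  sum2 (fun c => g a c x y * ginv c b x y) = delta2 a b /\
  sum2 (fun c => ginv a c x y * g c b x y) = delta2 a b.

Lemma Ginv_rad_l j : Ginv rad j x y r = delta3 rad j.
Proof.
  destruct (HGinv rad j) as [H _]; unfold sum3, Gmet in H; destruct j; simpl in *; lra.
Qed.

Lemma Ginv_rad_r i : Ginv i rad x y r = delta3 i rad.
Proof.
  destruct (HGinv i rad) as [_ H]; unfold sum3, Gmet in H; destruct i; simpl in *; lra.
Qed.

Lemma Ginv_surf a b : Ginv (s a) (s b) x y r = ginv a b x y / r ^ 2.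
Proof.
  rewrite <- (inv2_unique (fun a b => r ^ 2 * Ginv (s a) (s b) x y r)
                (fun a b => g a b x y) (fun a b => ginv a b x y)); [field; lra | |].
  - intros a' b'; destruct (HGinv (s a') (s b')) as [_ H].
    unfold sum3, sum2, Gmet in *; simpl in *; rewrite <- H; ring.
  - intros; apply Hginv.
Qed.

Lemma Gam3_cone i j k : Gam3 g Ginv i j k x y r = cone_christoffel g ginv i j k x y r.
Proof.
  unfold Gam3, sum3.
  destruct i as [a|]; destruct j as [b|]; destruct k as [c|]; simpl cone_christoffel;
    rewrite ?Ginv_rad_l, ?Ginv_rad_r, ?Ginv_surf, ?pd3_Gmet_surf, ?pd3_Gmet_rad,
      ?pd3_Gmet_const by auto; simpl delta3.
  1: unfold Gam2, sum2.
  2: destruct (Hginv a b) as [_ <-]; unfold sum2.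
  3: destruct (Hginv a c) as [_ <-]; unfold sum2.
  all: field; lra.
Qed.

End ConeMetric.

(* For a density of weight one the two Christoffel contractions coincide after relabelling
   the summation indices. *)
Lemma divD1_cancel g Ginv T x y r :
  divD1 g Ginv T x y r = sum3 (fun j => pd3 j (T j) x y r).
Proof. unfold divD1, sum3; ring. Qed.

Lemma divD2_cancel g Ginv T i x y r :
  divD2 g Ginv T i x y r = sum3 (fun j => pd3 j (T i j) x y r)
   + sum3 (fun j => sum3 (fun l => Gam3 g Ginv i j l x y r * T l j x y r)).
Proof. unfold divD2, sum3; ring. Qed.

(* Densities sqrt(G) W whose physical components (with respect to the orthonormal
   frame of dr^2 + r^2 g) do not depend on r: each surface index costs a factor 1/r. *)
Definition conical_vector_density (U : R -> R -> Prop) (T : ix3 -> fld3)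
  (f : ix -> fld2) (h : fld2) : Prop :=
  forall x y t, U x y -> 0 < t ->
    (forall b, T (s b) x y t = t * f b x y) /\ T rad x y t = t ^ 2 * h x y.

Definition conical_tensor_density (U : R -> R -> Prop) (T : ix3 -> ix3 -> fld3)
  (A : ix -> ix -> fld2) (B : ix -> fld2) (C : fld2) : Prop :=
  forall x y t, U x y -> 0 < t ->
    (forall a b, T (s a) (s b) x y t = A a b x y) /\
    (forall a, T (s a) rad x y t = t * B a x y /\ T rad (s a) x y t = t * B a x y) /\
    T rad rad x y t = t ^ 2 * C x y.

Section ConicalDivergence.

Variables (U : R -> R -> Prop) (g ginv : ix -> ix -> fld2) (Ginv : ix3 -> ix3 -> fld3)
  (x y r : R).
Hypothesis HU : open2 U.
Hypothesis Hu : U x y.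
Hypothesis Hr : 0 < r.

Lemma divD1_conical T f h : conical_vector_density U T f h ->
  divD1 g Ginv T x y r = r * (sum2 (fun b => pd2 b (f b) x y) + 2 * h x y).
Proof.
  intros HT.
  assert (Hs : forall b, pd3 (s b) (T (s b)) x y r = r * pd2 b (f b) x y).
  { intros b; apply (pd3_surface_local U); auto.
    intros x' y' H'; apply (HT x' y' r H' Hr). }
  assert (Hrad : pd3 rad (T rad) x y r = 2 * r * h x y).
  { apply pd3_rad_quadratic; auto; intros t Ht; apply (HT x y t Hu Ht). }
  rewrite divD1_cancel; unfold sum3, sum2; rewrite !Hs, Hrad; ring.
Qed.

Hypothesis HGinv : forall i j,
  sum3 (fun k => Gmet g i k x y r * Ginv k j x y r) = delta3 i j /\
  sum3 (fun k => Ginv i k x y r * Gmet g k j x y r) = delta3 i j.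
Hypothesis Hginv : forall a b,
  sum2 (fun c => g a c x y * ginv c b x y) = delta2 a b /\
  sum2 (fun c => ginv a c x y * g c b x y) = delta2 a b.

Lemma divD2_conical_surf T A B C a : conical_tensor_density U T A B C ->
  divD2 g Ginv T (s a) x y r =
  sum2 (fun b => pd2 b (A a b) x y)
  + sum2 (fun b => sum2 (fun c => Gam2 g ginv a b c x y * A c b x y)) + 3 * B a x y.
Proof.
  intros HT.
  assert (Hs : forall b, pd3 (s b) (T (s a) (s b)) x y r = 1 * pd2 b (A a b) x y).
  { intros b; apply (pd3_surface_local U); auto.
    intros x' y' H'; rewrite Rmult_1_l; apply (HT x' y' r H' Hr). }
  assert (Hrad : pd3 rad (T (s a) rad) x y r = B a x y).
  { apply pd3_rad_linear; auto; intros t Ht; apply (HT x y t Hu Ht). }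
  destruct (HT x y r Hu Hr) as [HA [HB HC]].
  rewrite divD2_cancel; unfold sum3, sum2; rewrite !Hs, Hrad.
  rewrite !(Gam3_cone g ginv Ginv x y r Hr HGinv Hginv); simpl cone_christoffel.
  rewrite !HA, !(proj1 (HB _)), !(proj2 (HB _)), HC.
  destruct a; simpl delta2; field; lra.
Qed.

Lemma divD2_conical_rad T A B C : conical_tensor_density U T A B C ->
  divD2 g Ginv T rad x y r =
  r * (sum2 (fun b => pd2 b (B b) x y) + 2 * C x y
       - sum2 (fun b => sum2 (fun c => g b c x y * A c b x y))).
Proof.
  intros HT.
  assert (Hs : forall b, pd3 (s b) (T rad (s b)) x y r = r * pd2 b (B b) x y).
  { intros b; apply (pd3_surface_local U); auto.
    intros x' y' H'; apply (HT x' y' r H' Hr). }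
  assert (Hrad : pd3 rad (T rad rad) x y r = 2 * r * C x y).
  { apply pd3_rad_quadratic; auto; intros t Ht; apply (HT x y t Hu Ht). }
  destruct (HT x y r Hu Hr) as [HA [HB HC]].
  rewrite divD2_cancel; unfold sum3, sum2; rewrite !Hs, Hrad.
  rewrite !(Gam3_cone g ginv Ginv x y r Hr HGinv Hginv); simpl cone_christoffel.
  rewrite !HA; ring.
Qed.

End ConicalDivergence.

Definition mass_flux g (rho : fld3) (V : ix3 -> fld3) : ix3 -> fld3 :=
  fun j x y r => sqrtG g x y r * rho x y r * V j x y r.
Definition momentum_flux g Ginv Pfun (rho e : fld3) (V : ix3 -> fld3) : ix3 -> ix3 -> fld3 :=
  fun i j x y r => sqrtG g x y r *
    (rho x y r * V i x y r * V j x y r + Ginv i j x y r * P3 Pfun rho e x y r).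
Definition energy_flux g Pfun (rho e : fld3) (V : ix3 -> fld3) : ix3 -> fld3 :=
  fun j x y r => sqrtG g x y r *
    (rho x y r * E3 g e V x y r + P3 Pfun rho e x y r) * V j x y r.

Lemma Euler3D_fluxes g Ginv Pfun rho e V x y r :
  Euler3D g Ginv Pfun rho e V x y r <->
  divD1 g Ginv (mass_flux g rho V) x y r = 0 /\
  (forall i, divD2 g Ginv (momentum_flux g Ginv Pfun rho e V) i x y r = 0) /\
  divD1 g Ginv (energy_flux g Pfun rho e V) x y r = 0.
Proof. reflexivity. Qed.

Definition mass_residual g (rho : fld3) (V : ix3 -> fld3) (x y : R) : R :=
  sum2 (fun b => pd2 b (fun x y => rho_s rho x y * sqrtg g x y * v_s V b x y) x y)
  + 2 * rho_s rho x y * sqrtg g x y * V3_s V x y.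
Definition momentum_residual g ginv Pfun (rho e : fld3) (V : ix3 -> fld3) a (x y : R) : R :=
  sum2 (fun b => pd2 b (fun x y => sqrtg g x y *
    (rho_s rho x y * v_s V a x y * v_s V b x y + ginv a b x y * P_s Pfun rho e x y)) x y)
  + sum2 (fun c => sum2 (fun n => Gam2 g ginv a c n x y * sqrtg g x y *
    (rho_s rho x y * v_s V c x y * v_s V n x y + ginv c n x y * P_s Pfun rho e x y)))
  + 3 * rho_s rho x y * sqrtg g x y * v_s V a x y * V3_s V x y.
Definition radial_residual g (V : ix3 -> fld3) (x y : R) : R :=
  sum2 (fun a => v_s V a x y * pd2 a (V3_s V) x y) - (qc g V x y) ^ 2.
Definition energy_residual g Pfun (rho e : fld3) (V : ix3 -> fld3) (x y : R) : R :=
  sum2 (fun b => pd2 b (fun x y => sqrtg g x y *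
    (rho_s rho x y * E_s g e V x y + P_s Pfun rho e x y) * v_s V b x y) x y)
  + 2 * sqrtg g x y * (rho_s rho x y * E_s g e V x y + P_s Pfun rho e x y) * V3_s V x y.

Lemma SurfaceSystem_residuals g ginv Pfun rho e V x y :
  SurfaceSystem g ginv Pfun rho e V x y <->
  mass_residual g rho V x y = 0 /\
  (forall a, momentum_residual g ginv Pfun rho e V a x y = 0) /\
  radial_residual g V x y = 0 /\
  energy_residual g Pfun rho e V x y = 0.
Proof. reflexivity. Qed.

Section ConicalFlow.

Variables (U : R -> R -> Prop) (g ginv : ix -> ix -> fld2) (Ginv : ix3 -> ix3 -> fld3)
  (rho e : fld3) (V : ix3 -> fld3) (Pfun : R -> R -> R).
Hypothesis HU : open2 U.
Hypothesis Hg_sym : forall x y, U x y -> forall a b, g a b x y = g b a x y.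
Hypothesis Hg_psd : forall x y, U x y -> forall w : ix -> R,
  0 <= sum2 (fun a => sum2 (fun b => g a b x y * w a * w b)).
Hypothesis Hdet : forall x y, U x y -> 0 < det2 g x y.
Hypothesis Hg_diff : forall x y, U x y -> forall a b,
  ex_derive (fun t => g a b t y) x /\ ex_derive (fun t => g a b x t) y.
Hypothesis Hginv : forall x y, U x y -> forall a b,
  sum2 (fun c => g a c x y * ginv c b x y) = delta2 a b /\
  sum2 (fun c => ginv a c x y * g c b x y) = delta2 a b.
Hypothesis HGinv : forall x y r, U x y -> 0 < r -> forall i j,
  sum3 (fun k => Gmet g i k x y r * Ginv k j x y r) = delta3 i j /\
  sum3 (fun k => Ginv i k x y r * Gmet g k j x y r) = delta3 i j.
Hypothesis Hdiff : forall x y r, U x y -> 0 < r ->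
  forall F, (F = rho \/ F = e \/ exists i, F = V i) ->
    ex_derive (fun t => F t y r) x /\ ex_derive (fun t => F x t r) y
    /\ ex_derive (fun t => F x y t) r.
Hypothesis Hrho : forall x y r, U x y -> 0 < r -> 0 < rho x y r.
Hypothesis Hconical : forall x y r, U x y -> 0 < r -> conical g Ginv rho e V x y r.

Lemma Gam3_flow x y t i j k : U x y -> 0 < t ->
  Gam3 g Ginv i j k x y t = cone_christoffel g ginv i j k x y t.
Proof. intros Hu Ht; apply Gam3_cone; auto. Qed.

Lemma is_derive_rad F x y t : U x y -> 0 < t ->
  (F = rho \/ F = e \/ exists i, F = V i) ->
  is_derive (fun t => F x y t) t (pd3 rad F x y t).
Proof. intros Hu Ht HF; apply Derive_correct, (Hdiff x y t Hu Ht F HF). Qed.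

Lemma rho_conical x y t : U x y -> 0 < t -> rho x y t = rho_s rho x y.
Proof.
  intros Hu Ht; apply (const_on_pos_of_derive0 (fun t => rho x y t)); auto.
  intros u Hu'; destruct (Hconical x y u Hu Hu') as [<- _].
  apply is_derive_rad; auto.
Qed.

Lemma e_conical x y t : U x y -> 0 < t -> e x y t = e_s e x y.
Proof.
  intros Hu Ht; apply (const_on_pos_of_derive0 (fun t => e x y t)); auto.
  intros u Hu'; destruct (Hconical x y u Hu Hu') as [_ [<- _]].
  apply is_derive_rad; auto.
Qed.

Lemma V3_conical x y t : U x y -> 0 < t -> V rad x y t = V3_s V x y.
Proof.
  intros Hu Ht; apply (const_on_pos_of_derive0 (fun t => V rad x y t)); auto.
  intros u Hu'; destruct (Hconical x y u Hu Hu') as [_ [_ Hcov]].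
  specialize (Hcov rad); unfold cov1, sum3 in Hcov.
  rewrite !Gam3_flow in Hcov by auto; simpl cone_christoffel in Hcov.
  replace 0 with (pd3 rad (V rad) x y u) by lra.
  apply is_derive_rad; eauto.
Qed.

(* V^a_{|r} = dV^a/dr + V^a/r = 0 makes r V^a independent of r. *)
Lemma Vsurf_conical x y t a : U x y -> 0 < t -> V (s a) x y t = v_s V a x y / t.
Proof.
  intros Hu Ht.
  assert (Hconst : t * V (s a) x y t = 1 * V (s a) x y 1).
  { apply (const_on_pos_of_derive0 (fun t => t * V (s a) x y t)); auto.
    intros u Hu'; destruct (Hconical x y u Hu Hu') as [_ [_ Hcov]].
    specialize (Hcov (s a)); unfold cov1, sum3 in Hcov.
    rewrite !Gam3_flow in Hcov by auto; simpl cone_christoffel in Hcov.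
    assert (Hd : pd3 rad (V (s a)) x y u = - V (s a) x y u / u)
      by (destruct a; simpl delta2 in Hcov; lra).
    replace 0 with (1 * V (s a) x y u + u * pd3 rad (V (s a)) x y u)
      by (rewrite Hd; field; lra).
    exact (is_derive_mult (fun t => t) (fun t => V (s a) x y t) u _ _ (is_derive_id u)
             (is_derive_rad _ x y u Hu Hu' (or_intror (or_intror (ex_intro _ _ eq_refl))))
             Rmult_comm). }
  unfold v_s; rewrite <- Hconst; field; lra.
Qed.

Lemma E3_conical x y t : U x y -> 0 < t -> E3 g e V x y t = E_s g e V x y.
Proof.
  intros Hu Ht; unfold E_s, E3, sum3, Gmet; simpl.
  rewrite (e_conical x y t), (V3_conical x y t), !(Vsurf_conical x y t) by auto.
  unfold v_s, e_s, V3_s; field; lra.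
Qed.

Lemma mass_flux_conical :
  conical_vector_density U (mass_flux g rho V)
    (fun b x y => rho_s rho x y * sqrtg g x y * v_s V b x y)
    (fun x y => rho_s rho x y * sqrtg g x y * V3_s V x y).
Proof.
  intros x y t Hu Ht; unfold mass_flux.
  rewrite sqrtG_cone, (rho_conical x y t), (V3_conical x y t) by auto.
  split; [intros b; rewrite (Vsurf_conical x y t) by auto; field; lra | ring].
Qed.

Lemma momentum_flux_conical :
  conical_tensor_density U (momentum_flux g Ginv Pfun rho e V)
    (fun a b x y => sqrtg g x y *
      (rho_s rho x y * v_s V a x y * v_s V b x y + ginv a b x y * P_s Pfun rho e x y))
    (fun a x y => rho_s rho x y * sqrtg g x y * v_s V a x y * V3_s V x y)
    (fun x y => sqrtg g x y * (rho_s rho x y * V3_s V x y ^ 2 + P_s Pfun rho e x y)).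
Proof.
  intros x y t Hu Ht; unfold momentum_flux, P3, P_s.
  rewrite sqrtG_cone, (rho_conical x y t), (e_conical x y t), !(V3_conical x y t) by auto.
  assert (HGt := HGinv x y t Hu Ht).
  split; [|split].
  - intros a b; rewrite !(Vsurf_conical x y t), (Ginv_surf g ginv Ginv x y t) by auto.
    field; lra.
  - intros a; rewrite (Ginv_rad_l g Ginv x y t HGt), (Ginv_rad_r g Ginv x y t HGt),
      !(Vsurf_conical x y t) by auto; simpl delta3; split; field; lra.
  - rewrite (Ginv_rad_l g Ginv x y t HGt); simpl delta3; ring.
Qed.

Lemma energy_flux_conical :
  conical_vector_density U (energy_flux g Pfun rho e V)
    (fun b x y => sqrtg g x y *
      (rho_s rho x y * E_s g e V x y + P_s Pfun rho e x y) * v_s V b x y)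
    (fun x y => sqrtg g x y *
      (rho_s rho x y * E_s g e V x y + P_s Pfun rho e x y) * V3_s V x y).
Proof.
  intros x y t Hu Ht; unfold energy_flux, P3, P_s.
  rewrite sqrtG_cone, (rho_conical x y t), (e_conical x y t), (E3_conical x y t),
    (V3_conical x y t) by auto.
  split; [intros b; rewrite (Vsurf_conical x y t) by auto; field; lra | ring].
Qed.

Lemma mass_balance x y r : U x y -> 0 < r ->
  divD1 g Ginv (mass_flux g rho V) x y r = r * mass_residual g rho V x y.
Proof.
  intros Hu Hr; rewrite (divD1_conical U g Ginv x y r HU Hu Hr _ _ _ mass_flux_conical).
  unfold mass_residual; ring.
Qed.

Lemma energy_balance x y r : U x y -> 0 < r ->
  divD1 g Ginv (energy_flux g Pfun rho e V) x y r = r * energy_residual g Pfun rho e V x y.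
Proof.
  intros Hu Hr; rewrite (divD1_conical U g Ginv x y r HU Hu Hr _ _ _ energy_flux_conical).
  unfold energy_residual; ring.
Qed.

Lemma momentum_balance_surf x y r a : U x y -> 0 < r ->
  divD2 g Ginv (momentum_flux g Ginv Pfun rho e V) (s a) x y r
  = momentum_residual g ginv Pfun rho e V a x y.
Proof.
  intros Hu Hr.
  rewrite (divD2_conical_surf U g ginv Ginv x y r HU Hu Hr (HGinv x y r Hu Hr) (Hginv x y Hu)
             _ _ _ _ a momentum_flux_conical).
  assert (ginv_sym := inv2_sym (fun a b => g a b x y) (fun a b => ginv a b x y)
                        (Hg_sym x y Hu) (fun a b => proj1 (Hginv x y Hu a b))).
  unfold momentum_residual, sum2; cbv beta; rewrite (ginv_sym i2 i1); ring.
Qed.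

Lemma ex_pd2_surface F b x y : U x y -> (F = rho \/ F = e \/ exists i, F = V i) ->
  ex_pd2 b (fun x y => F x y 1) x y.
Proof.
  intros Hu HF; destruct (Hdiff x y 1 Hu Rlt_0_1 F HF) as [D1 [D2 _]]; destruct b; assumption.
Qed.

Lemma ex_pd2_mass_flux b x y : U x y ->
  ex_pd2 b (fun x y => rho_s rho x y * sqrtg g x y * v_s V b x y) x y.
Proof.
  intros Hu.
  apply (ex_pd2_mult b (fun x y => rho_s rho x y * sqrtg g x y)); [apply ex_pd2_mult|].
  - apply ex_pd2_surface; auto.
  - apply ex_pd2_sqrtg; [|auto]; intros c d; destruct (Hg_diff x y Hu c d), b; assumption.
  - unfold v_s; apply (ex_pd2_mult b (fun _ _ => 1)); [destruct b; simpl; apply ex_derive_const|].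
    apply ex_pd2_surface; eauto.
Qed.

Lemma momentum_balance_rad x y r : U x y -> 0 < r ->
  divD2 g Ginv (momentum_flux g Ginv Pfun rho e V) rad x y r
  = r * (V3_s V x y * mass_residual g rho V x y
         + rho_s rho x y * sqrtg g x y * radial_residual g V x y).
Proof.
  intros Hu Hr.
  rewrite (divD2_conical_rad U g ginv Ginv x y r HU Hu Hr (HGinv x y r Hu Hr) (Hginv x y Hu)
             _ _ _ _ momentum_flux_conical).
  assert (HW : forall b, ex_pd2 b (V3_s V) x y).
  { intros b; apply (ex_pd2_surface (V rad)); eauto. }
  rewrite (sum2_pd2_mult (fun b x y => rho_s rho x y * sqrtg g x y * v_s V b x y) (V3_s V)
    x y (fun b => ex_pd2_mass_flux b x y Hu) HW).
  assert (Htrace := trace_mul_inv2 (fun a b => g a b x y) (fun a b => ginv a b x y)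
                      (fun a b => proj1 (Hginv x y Hu a b))).
  set (q2 := sum2 (fun a => sum2 (fun b => g a b x y * v_s V a x y * v_s V b x y))).
  assert (HgA : sum2 (fun b => sum2 (fun c => g b c x y * (sqrtg g x y *
     (rho_s rho x y * v_s V c x y * v_s V b x y + ginv c b x y * P_s Pfun rho e x y))))
   = rho_s rho x y * sqrtg g x y * q2
     + sqrtg g x y * P_s Pfun rho e x y * sum2 (fun b => sum2 (fun c => g b c x y * ginv c b x y)))
    by (unfold q2, sum2; ring).
  rewrite HgA, Htrace.
  unfold radial_residual, qc; fold q2; rewrite pow2_sqrt by apply Hg_psd, Hu.
  unfold mass_residual, sum2; ring.
Qed.

Lemma Euler3D_iff_SurfaceSystem x y r : U x y -> 0 < r ->
  Euler3D g Ginv Pfun rho e V x y r <-> SurfaceSystem g ginv Pfun rho e V x y.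
Proof.
  intros Hu Hr.
  assert (cancel : forall k z, 0 < k -> k * z = 0 -> z = 0).
  { intros k z Hk Hkz; destruct (Rmult_integral _ _ Hkz); [lra | assumption]. }
  assert (Hpos : 0 < rho_s rho x y * sqrtg g x y).
  { apply Rmult_lt_0_compat; [apply Hrho; auto; lra | apply sqrt_lt_R0, Hdet, Hu]. }
  rewrite Euler3D_fluxes, SurfaceSystem_residuals, mass_balance, energy_balance by auto.
  split.
  - intros [HM [HD HE]].
    apply cancel in HM; [|exact Hr]; apply cancel in HE; [|exact Hr].
    split; [exact HM|]; split; [|split; [|exact HE]].
    + intros a; rewrite <- (momentum_balance_surf x y r a Hu Hr); apply HD.
    + specialize (HD rad); rewrite momentum_balance_rad, HM in HD by auto.
      apply (cancel _ _ Hpos), (cancel _ _ Hr); rewrite <- HD; ring.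
  - intros [HM [HMom [HRad HE]]].
    rewrite HM, HE; split; [ring|]; split; [|ring].
    intros [a|].
    + rewrite momentum_balance_surf by auto; apply HMom.
    + rewrite momentum_balance_rad, HM, HRad by auto; ring.
Qed.

End ConicalFlow.

Theorem mainTheorem1
  (U : R -> R -> Prop)                 (* open domain of surface coordinates *)
  (g ginv : ix -> ix -> R -> R -> R)   (* metric g_{ab} of the unit sphere, inverse g^{ab} *)
  (Ginv : ix3 -> ix3 -> R -> R -> R -> R)  (* inverse 3D metric G^{ij} *)
  (rho e : R -> R -> R -> R)           (* density, specific thermal energy *)
  (V : ix3 -> R -> R -> R -> R)        (* contravariant velocity components *)
  (Pfun : R -> R -> R)                 (* equation of state P = P(rho, e) *)
  (HU : open2 U)
  (* g is the metric of the unit sphere in the surface coordinates: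
     pullback of the Euclidean metric by a chart X of the unit sphere *)
  (Hsphere : exists X : nat -> R -> R -> R,
      forall x y, U x y ->
        (forall k, ex_derive (fun t => X k t y) x /\ ex_derive (fun t => X k x t) y) /\
        X 0%nat x y ^ 2 + X 1%nat x y ^ 2 + X 2%nat x y ^ 2 = 1 /\
        (forall a b, g a b x y =
           pd2 a (X 0%nat) x y * pd2 b (X 0%nat) x y
         + pd2 a (X 1%nat) x y * pd2 b (X 1%nat) x y
         + pd2 a (X 2%nat) x y * pd2 b (X 2%nat) x y))
  (Hg_diff : forall x y, U x y -> forall a b,
      ex_derive (fun t => g a b t y) x /\ ex_derive (fun t => g a b x t) y)
  (Hginv : forall x y, U x y -> forall a b,
      sum2 (fun c => g a c x y * ginv c b x y) = delta2 a b /\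
      sum2 (fun c => ginv a c x y * g c b x y) = delta2 a b)
  (HGinv : forall x y r, U x y -> 0 < r -> forall i j,
      sum3 (fun k => Gmet g i k x y r * Ginv k j x y r) = delta3 i j /\
      sum3 (fun k => Ginv i k x y r * Gmet g k j x y r) = delta3 i j)
  (Hdiff : forall x y r, U x y -> 0 < r ->
      forall F, (F = rho \/ F = e \/ exists i, F = V i) ->
        ex_derive (fun t => F t y r) x /\ ex_derive (fun t => F x t r) y
        /\ ex_derive (fun t => F x y t) r)
  (Hrho : forall x y r, U x y -> 0 < r -> 0 < rho x y r)
  (Hconical : forall x y r, U x y -> 0 < r -> conical g Ginv rho e V x y r) :
  forall x y r, U x y -> 0 < r ->
    (Euler3D g Ginv Pfun rho e V x y r <-> SurfaceSystem g ginv Pfun rho e V x y).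
Proof.
  destruct Hsphere as [X HX].
  pose (J x y a k := pd2 a (X k) x y).
  apply Euler3D_iff_SurfaceSystem; auto.
  - intros x y Hu; apply (gram_sym (J x y)), HX, Hu.
  - intros x y Hu; apply (gram_form_nonneg (J x y)), HX, Hu.
  - intros x y Hu.
    assert (Hgram_det := gram_det_nonneg (J x y) _ (proj2 (proj2 (HX x y Hu)))).
    assert (Hdet_ne := det2_neq0_of_inv g ginv x y (fun a b => proj1 (Hginv x y Hu a b))).
    unfold det2 in *; lra.
Qed.
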